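(* Suppose all distributions are Gaussian with a common known variance $\sigma^2>0$, i.e. $\nu_{a,i}=\mathcal N(\mu_{a,i},\sigma^2)$, let $\boldsymbol\mu\in\mathcal L$ and assume $\boldsymbol\beta\neq0$. Let \[ (u_0^\star,\dots,u_K^\star)\in\operatorname*{argmax}_{\mathbf u\in\Sigma_{K+1}}\ \min_{b\in[K]}\ \frac{\Delta_b^2}{2\left(\frac1{u_0}+\frac1{u_b}\right)},\qquad \Delta_b=\mu_0-\mu_b. \] Then the optimal weights for the active mode (maximizers over $\mathcal C_{\mathrm{active}}$ in the definition of $T^\star_{\mathrm{active}}(\boldsymbol\mu)^{-1}$) are given by \[ w^\star_{a,i}=u^\star_a\,\frac{|\beta_i|}{\sum_{j=1}^J|\beta_j|}\qquad\text{for all }a\in\{0,\dots,K\},\ i\le J. \] If in addition $\boldsymbol\alpha=\boldsymbol\beta$, the same weights are optimal for the agnostic and the proportional modes.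
   Context: Arms $a\in\{0,\dots,K\}$ with $K\ge1$ (arm $0$ the control), subpopulations $i\in[J]$, means $\boldsymbol\mu=(\mu_{a,i})$; the KL divergence between $\mathcal N(x,\sigma^2)$ and $\mathcal N(y,\sigma^2)$ is $d(x,y)=(x-y)^2/(2\sigma^2)$. Known $\boldsymbol\beta\in\mathbb R^J$ and $\boldsymbol\alpha\in\Sigma_J$ ($\Sigma_n$ the probability simplex). $\mu_a=\sum_i\beta_i\mu_{a,i}$, $\mathcal S_{\boldsymbol\beta}(\boldsymbol\mu)=\{a\in[K]:\mu_a>\mu_0\}$, $\mathcal L=\{\boldsymbol\mu\in\mathbb R^{(K+1)\times J}:\mu_a\ne\mu_0\ \forall a\in[K]\}$, $\mathrm{Alt}_{\boldsymbol\beta}(\boldsymbol\mu)=\{\boldsymbol\lambda\in\mathcal L:\mathcal S_{\boldsymbol\beta}(\boldsymbol\lambda)\neq\mathcal S_{\boldsymbol\beta}(\boldsymbol\mu)\}$, with $\lambda_a=\sum_i\beta_i\lambda_{a,i}$. For a constraint set $\mathcal C$, $T^\star(\boldsymbol\mu)^{-1}=\sup_{\mathbf w\in\mathcal C}\inf_{\boldsymbol\lambda\in\mathrm{Alt}_{\boldsymbol\beta}(\boldsymbol\mu)}\sum_{a,i}w_{a,i}d(\mu_{a,i},\lambda_{a,i})$; optimal weights are maximizers of this supremum. Active mode: $\mathcal C_{\mathrm{active}}=\Sigma_{(K+1)J}$; proportional: $\mathcal C_{\mathrm{prop}}=\{\mathbf w\in\Sigma_{(K+1)J}:\sum_aw_{a,i}=\alpha_i\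 \forall i\}$; agnostic: $\mathcal C_{\mathrm{agnostic}}=\{\mathbf w:w_{a,i}=\alpha_iu_a,\ \mathbf u\in\Sigma_{K+1}\}$. *)

From mathcomp Require Import all_boot all_order all_algebra.
From mathcomp Require Import classical_sets reals.
Set Implicit Arguments. Unset Strict Implicit. Unset Printing Implicit Defensive.
Import Order.TTheory GRing.Theory Num.Theory.
Local Open Scope ring_scope.
Local Open Scope classical_set_scope.

Section Defs.
Variables (R : realType) (K J : nat).

(* arms are 'I_K.+1 (arm ord0 is the control), subpopulations are 'I_J;
   a mean matrix / weight vector is a function 'I_K.+1 -> 'I_J -> R *)
Definition arm_mean (beta : 'I_J -> R) (m : 'I_K.+1 -> 'I_J -> R) (a : 'I_K.+1) : R :=
  \sum_(i < J) beta i * m a i.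

Definition S_beta (beta : 'I_J -> R) (m : 'I_K.+1 -> 'I_J -> R) : {set 'I_K.+1} :=
  [set a | (a != ord0) && (arm_mean beta m ord0 < arm_mean beta m a)].

Definition in_L (beta : 'I_J -> R) (m : 'I_K.+1 -> 'I_J -> R) : Prop :=
  forall a : 'I_K.+1, a != ord0 -> arm_mean beta m a != arm_mean beta m ord0.

Definition Alt (beta : 'I_J -> R) (mu : 'I_K.+1 -> 'I_J -> R)
  : set ('I_K.+1 -> 'I_J -> R) :=
  [set lam | in_L beta lam /\ S_beta beta lam != S_beta beta mu].

Definition kl_gauss (sigma x y : R) : R := (x - y) ^+ 2 / (2 * sigma ^+ 2).

Definition alt_objective (sigma : R) (beta : 'I_J -> R)
  (mu w : 'I_K.+1 -> 'I_J -> R) : R :=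
  inf [set (\sum_(a < K.+1) \sum_(i < J) w a i * kl_gauss sigma (mu a i) (lam a i))
      | lam in Alt beta mu].

Definition C_active (w : 'I_K.+1 -> 'I_J -> R) : Prop :=
  (forall a i, 0 <= w a i) /\ \sum_(a < K.+1) \sum_(i < J) w a i = 1.

Definition C_prop (alpha : 'I_J -> R) (w : 'I_K.+1 -> 'I_J -> R) : Prop :=
  C_active w /\ forall i, \sum_(a < K.+1) w a i = alpha i.

Definition in_simplex n (u : 'I_n -> R) : Prop :=
  (forall k, 0 <= u k) /\ \sum_(k < n) u k = 1.

Definition C_agnostic (alpha : 'I_J -> R) (w : 'I_K.+1 -> 'I_J -> R) : Prop :=
  exists u : 'I_K.+1 -> R, in_simplex u /\ forall a i, w a i = alpha i * u a.

Definition optimal_weights (C : ('I_K.+1 -> 'I_J -> R) -> Prop) (sigma : R)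
  (beta : 'I_J -> R) (mu w : 'I_K.+1 -> 'I_J -> R) : Prop :=
  C w /\ forall w', C w' -> alt_objective sigma beta mu w' <= alt_objective sigma beta mu w.

(* Delta_b^2 / (2 (1/u_0 + 1/u_b)), with the convention 1/0 = +oo,
   i.e. the term is 0 when u_0 = 0 or u_b = 0 *)
Definition pair_term (Delta u0 ub : R) : R :=
  if (0 < u0) && (0 < ub) then Delta ^+ 2 / (2 * (u0^-1 + ub^-1)) else 0.

Definition u_objective (beta : 'I_J -> R) (mu : 'I_K.+1 -> 'I_J -> R)
  (u : 'I_K.+1 -> R) : R :=
  \big[Order.min/pair_term (arm_mean beta mu ord0 - arm_mean beta mu ord_max)
                           (u ord0) (u ord_max)]_(b < K.+1 | b != ord0)
     pair_term (arm_mean beta mu ord0 - arm_mean beta mu b) (u ord0) (u b).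

End Defs.

(* Write [S = sum_i |beta_i|] and [u_a = sum_i w_(a,i)].  Moving the
   coordinates of arm [a] by [(t_a - m_a) sg(beta_i) / S] moves its aggregated
   mean from [m_a] to [t_a] at cost [u_a (t_a - m_a)^2 / (2 sigma^2 S^2)], and by
   Cauchy-Schwarz no perturbation does it more cheaply when
   [w_(a,i) = u_a |beta_i| / S]; so only the arm weights [u] matter.  An
   alternative must reverse the order of [m_0] and [m_b] for some arm [b], and
   the cheapest reversal moves both means to their [u]-weighted average, at cost
   [Delta_b^2 / (2 (1/u_0 + 1/u_b)) / (sigma^2 S^2)]; this infimum is approached,
   not attained, by alternatives in [L].  Hence the objective of any [w] is at
   most [u_objective u / (sigma^2 S^2)], with equality for [u * |beta| / S], and
   [wstar] is optimal.  The agnostic and proportional sets lie inside the active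
   one and contain [wstar] when [alpha = beta]. *)

From mathcomp Require Import all_boot all_order all_algebra.
From mathcomp Require Import classical_sets reals.
From mathcomp Require Import ring lra.
Set Implicit Arguments. Unset Strict Implicit. Unset Printing Implicit Defensive.
Import Order.TTheory GRing.Theory Num.Theory.
Local Open Scope ring_scope.

Section RealFacts.
Variable R : realFieldType.

Lemma weighted_cauchy_schwarz (J : nat) (beta x : 'I_J -> R) :
  0 < \sum_(j < J) `|beta j| ->
  (\sum_(i < J) beta i * x i) ^+ 2 / \sum_(j < J) `|beta j|
    <= \sum_(i < J) `|beta i| * x i ^+ 2.
Proof.
set S := \sum_(j < J) _; set X := \sum_(i < J) _ => S_gt0.
(* Tangent-line bound for [|beta_i| x_i^2], at the optimal slope [t = X / S]. *)
pose t := X / S.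
have tangent i : 2 * t * (beta i * x i) - t ^+ 2 * `|beta i| <= `|beta i| * x i ^+ 2.
  case: (lerP 0 (beta i)) => hb; [rewrite ger0_norm // | rewrite ltr0_norm //].
    have := mulr_ge0 hb (sqr_ge0 (x i - t)); nra.
  have nb_ge0 : 0 <= - beta i by lra.
  have := mulr_ge0 nb_ge0 (sqr_ge0 (x i + t)); nra.
apply: le_trans (ler_sum _ (fun i _ => tangent i)).
rewrite big_split /= sumrN -!mulr_sumr -/X -/S /t.
by rewrite le_eqVlt; apply/orP; left; apply/eqP; field; rewrite gt_eqF.
Qed.

Lemma sqr_shift_le (y c s : R) : 0 <= s <= 1 ->
  (y + s * c) ^+ 2 <= y ^+ 2 + s * (2 * `|y * c| + c ^+ 2).
Proof.
case/andP=> s_ge0 s_le1.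
have cross := ler_wpM2l s_ge0 (ler_norm (y * c)).
have quad := ler_wpM2r (sqr_ge0 c) (ler_piMl s_ge0 s_le1 : s * s <= s).
rewrite sqrrD exprMn expr2 in quad *; lra.
Qed.

Lemma le_of_forall_small_shift (x g k delta : R) : 0 < delta ->
  (forall s, 0 < s < delta -> x <= g + s * k) -> x <= g.
Proof.
move=> delta_gt0 small; apply/ler_addgt0Pr => e e_gt0.
have k1_gt0 : 0 < `|k| + 1 by have := normr_ge0 k; lra.
pose s := Num.min (delta / 2) (e / (`|k| + 1)).
have s_gt0 : 0 < s by rewrite lt_min !divr_gt0.
have s_lt : s < delta by rewrite gt_min; apply/orP; left; lra.
have sk1_le : s * (`|k| + 1) <= e by rewrite -ler_pdivlMr // ge_min lexx orbT.
apply: le_trans (small s _) _; first by rewrite s_gt0.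
have := ler_wpM2l (ltW s_gt0) (ler_norm k); nra.
Qed.

Lemma exists_gap_right (I : finType) (f : I -> R) (x : R) :
  exists2 delta, 0 < delta & forall s i, 0 < s < delta -> f i != x + s.
Proof.
pose delta := \big[Num.min/1]_(i | f i != x) `|f i - x|.
exists delta.
  by apply/bigmin_gtP; split=> // i fi_neq; rewrite normr_gt0 subr_eq0.
move=> s i /andP[s_gt0 s_lt]; apply/eqP => fi_eq.
have fi_neq : f i != x by rewrite fi_eq -subr_eq0 addrC addKr gt_eqF.
have := bigmin_le_cond 1 (fun i => `|f i - x|) (fi_neq : (fun i => f i != x) i).
by rewrite -/delta fi_eq addrC addKr gtr0_norm // leNgt s_lt.
Qed.

End RealFacts.

Section PairTerm.
Variable R : realType.

Lemma pair_termE (D u0 u1 : R) : 0 < u0 -> 0 < u1 ->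
  pair_term D u0 u1 = D ^+ 2 * (u0 * u1) / (2 * (u0 + u1)).
Proof.
move=> u0_gt0 u1_gt0; rewrite /pair_term u0_gt0 u1_gt0 /=.
by field; rewrite ?gt_eqF ?addr_gt0 //; lra.
Qed.

Lemma pair_term_le_sqr_dev (D E X Y u0 u1 : R) : 0 <= u0 -> 0 <= u1 ->
  D * E <= 0 -> X - Y = D - E ->
  2 * pair_term D u0 u1 <= u0 * X ^+ 2 + u1 * Y ^+ 2.
Proof.
move=> u0_ge0 u1_ge0 DE_le0 XY.
have dev_ge0 : 0 <= u0 * X ^+ 2 + u1 * Y ^+ 2 by apply: addr_ge0; nra.
have [/andP[u0_gt0 u1_gt0]|not_pos] := boolP ((0 < u0) && (0 < u1)); last first.
  by rewrite /pair_term (negbTE not_pos) mulr0.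
rewrite pair_termE // mulrA ler_pdivrMr; last by nra.
have D2_le : D ^+ 2 <= (X - Y) ^+ 2 by rewrite XY; nra.
have := ler_wpM2r (mulr_ge0 u0_ge0 u1_ge0) D2_le.
have := sqr_ge0 (u0 * X + u1 * Y); nra.
Qed.

Lemma pair_term_weighted_mean (x y u0 u1 : R) : 0 <= u0 -> 0 <= u1 ->
  let p := (u0 * x + u1 * y) / (u0 + u1) in
  u0 * (p - x) ^+ 2 + u1 * (p - y) ^+ 2 = 2 * pair_term (x - y) u0 u1.
Proof.
move=> u0_ge0 u1_ge0 p; rewrite /pair_term.
case: ifP => [/andP[u0_gt0 u1_gt0]|]; first by rewrite /p; field; rewrite gt_eqF //; lra.
move=> /negbT; rewrite negb_and -!leNgt mulr0 => /orP[u0_le0|u1_le0].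
  have u0_0 : u0 = 0 by apply/le_anti/andP.
  have [u1_0|u1_neq0] := eqVneq u1 0; first by rewrite u0_0 u1_0 !mul0r addr0.
  have -> : p = y by rewrite /p u0_0 mul0r !add0r; field.
  by rewrite u0_0 subrr expr0n /= !mulr0 mul0r addr0.
have u1_0 : u1 = 0 by apply/le_anti/andP.
have [u0_0|u0_neq0] := eqVneq u0 0; first by rewrite u0_0 u1_0 !mul0r addr0.
have -> : p = x by rewrite /p u1_0 mul0r !addr0; field.
by rewrite u1_0 subrr expr0n /= !mulr0 mul0r addr0.
Qed.

End PairTerm.

Section GaussianAlternatives.
Variables (R : realType) (K J : nat) (sigma : R) (beta : 'I_J -> R)
  (mu : 'I_K.+1 -> 'I_J -> R).
Hypotheses (sigma_gt0 : 0 < sigma) (beta_norm_gt0 : 0 < \sum_(j < J) `|beta j|).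

Local Notation S := (\sum_(j < J) `|beta j|).
Local Notation m := (arm_mean beta mu).

Definition alt_cost (w lam : 'I_K.+1 -> 'I_J -> R) : R :=
  \sum_(a < K.+1) \sum_(i < J) w a i * kl_gauss sigma (mu a i) (lam a i).

Lemma kl_gauss_ge0 (x y : R) : 0 <= kl_gauss sigma x y.
Proof. by rewrite /kl_gauss divr_ge0 ?sqr_ge0 // mulr_ge0 ?sqr_ge0. Qed.

Lemma alt_cost_ge0 w lam : (forall a i, 0 <= w a i) -> 0 <= alt_cost w lam.
Proof.
move=> w_ge0; rewrite /alt_cost.
by apply: sumr_ge0 => a _; apply: sumr_ge0 => i _; rewrite mulr_ge0 ?kl_gauss_ge0.
Qed.

Lemma alt_objective_le_cost w lam : (forall a i, 0 <= w a i) ->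
  Alt beta mu lam -> alt_objective sigma beta mu w <= alt_cost w lam.
Proof.
move=> w_ge0 Alt_lam; apply: ge_inf; last by exists lam.
by exists 0 => _ [l _ <-]; exact: alt_cost_ge0.
Qed.

Lemma lb_le_alt_objective w x : (exists lam, Alt beta mu lam) ->
  (forall lam, Alt beta mu lam -> x <= alt_cost w lam) ->
  x <= alt_objective sigma beta mu w.
Proof.
move=> [lam Alt_lam] cost_ge; apply: lb_le_inf; first by exists (alt_cost w lam), lam.
by move=> _ [l /cost_ge ? <-].
Qed.

Lemma Alt_sign_change lam : Alt beta mu lam ->
  exists2 a, a != ord0 &
    (m ord0 - m a) * (arm_mean beta lam ord0 - arm_mean beta lam a) <= 0.
Proof.
move=> [_ S_neq].
have /existsP[a Sa_neq] : [exists a, (a \in S_beta beta lam) != (a \in S_beta beta mu)].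
  rewrite -negb_forall; apply: contra S_neq => /forallP S_eq.
  by apply/eqP/setP => a; apply/eqP/S_eq.
move: Sa_neq; rewrite !inE; have [->|a_neq0 /= Sa_neq] //= := eqVneq a ord0.
exists a => //; move: Sa_neq; set l := arm_mean beta lam.
by case: (ltrP (l ord0) (l a)) => ?; case: (ltrP (m ord0) (m a)) => ? //= _; nra.
Qed.

Lemma arm_cost_ge (u : 'I_K.+1 -> R) lam a : 0 <= u a ->
  u a * (m a - arm_mean beta lam a) ^+ 2 / (2 * sigma ^+ 2 * S ^+ 2)
    <= \sum_(i < J) u a * (`|beta i| / S) * kl_gauss sigma (mu a i) (lam a i).
Proof.
move=> u_ge0; have S_neq0 : S != 0 by rewrite gt_eqF.
have -> : \sum_(i < J) u a * (`|beta i| / S) * kl_gauss sigma (mu a i) (lam a i)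
    = u a / (2 * sigma ^+ 2 * S) * \sum_(i < J) `|beta i| * (mu a i - lam a i) ^+ 2.
  by rewrite mulr_sumr; apply: eq_bigr => i _; rewrite /kl_gauss; field; rewrite S_neq0 gt_eqF.
have -> : m a - arm_mean beta lam a = \sum_(i < J) beta i * (mu a i - lam a i).
  by rewrite /arm_mean -sumrB; apply: eq_bigr => i _; rewrite mulrBr.
apply: le_trans (ler_wpM2l _ (weighted_cauchy_schwarz _ beta_norm_gt0)).
  by rewrite le_eqVlt; apply/orP; left; apply/eqP; field; rewrite S_neq0 gt_eqF.
by rewrite divr_ge0 // ltW // !mulr_gt0 ?exprn_gt0.
Qed.

Lemma alt_cost_ge_u_objective (u : 'I_K.+1 -> R) lam : (forall a, 0 <= u a) ->
  Alt beta mu lam ->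
  u_objective beta mu u / (sigma ^+ 2 * S ^+ 2)
    <= alt_cost (fun a i => u a * (`|beta i| / S)) lam.
Proof.
move=> u_ge0 Alt_lam; have [a a_neq0 sign_change] := Alt_sign_change Alt_lam.
set l := arm_mean beta lam; set C := 2 * sigma ^+ 2 * S ^+ 2.
have C_gt0 : 0 < C by rewrite !mulr_gt0 ?exprn_gt0.
pose F b := \sum_(i < J) u b * (`|beta i| / S) * kl_gauss sigma (mu b i) (lam b i).
have F_ge b : u b * (m b - l b) ^+ 2 / C <= F b by exact: arm_cost_ge.
have F_ge0 b : 0 <= F b.
  exact: le_trans (divr_ge0 (mulr_ge0 (u_ge0 b) (sqr_ge0 _)) (ltW C_gt0)) (F_ge b).
have two_arms : F ord0 + F a <= alt_cost (fun a i => u a * (`|beta i| / S)) lam.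
  rewrite /alt_cost (bigD1 ord0) //= (bigD1 a) //= addrA lerDl.
  by apply: sumr_ge0 => b _; exact: F_ge0.
have pair_le := pair_term_le_sqr_dev (u_ge0 ord0) (u_ge0 a) sign_change
  (_ : (m ord0 - l ord0) - (m a - l a) = (m ord0 - m a) - (l ord0 - l a)).
have u_obj_le : u_objective beta mu u <= pair_term (m ord0 - m a) (u ord0) (u a).
  exact: (bigmin_le_cond _ (P := fun b : 'I_K.+1 => b != ord0)).
apply: le_trans two_arms; apply: le_trans (lerD (F_ge ord0) (F_ge a)).
have -> : u_objective beta mu u / (sigma ^+ 2 * S ^+ 2) = 2 * u_objective beta mu u / C.
  by rewrite /C; field; rewrite !gt_eqF.
rewrite -mulrDl ler_pM2r ?invr_gt0 //; apply: le_trans (pair_le _); last by ring.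
by rewrite ler_pM2l.
Qed.


(* Shifting every coordinate of arm [a] by the same amount in the direction
   [sg beta_i] is the cheapest way (equality in Cauchy-Schwarz) to move its
   mean from [m a] to [t a]. *)
Definition retarget (t : 'I_K.+1 -> R) : 'I_K.+1 -> 'I_J -> R :=
  fun a i => mu a i + (t a - m a) / S * Num.sg (beta i).

Lemma arm_mean_retarget t a : arm_mean beta (retarget t) a = t a.
Proof.
rewrite /arm_mean /retarget; under eq_bigr do rewrite mulrDr.
rewrite big_split /=; under [X in _ + X]eq_bigr do rewrite mulrCA [beta _ * _]mulrC -normrEsg.
by rewrite -mulr_sumr divfK ?gt_eqF // addrC subrK.
Qed.

Lemma alt_cost_retarget_le w t : (forall a i, 0 <= w a i) ->
  alt_cost w (retarget t)
    <= \sum_(a < K.+1) (\sum_(i < J) w a i) * (t a - m a) ^+ 2 / (2 * sigma ^+ 2 * S ^+ 2).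
Proof.
move=> w_ge0; have C_gt0 : 0 < 2 * sigma ^+ 2 * S ^+ 2 by rewrite !mulr_gt0 ?exprn_gt0.
apply: ler_sum => a _; rewrite -mulrA mulr_suml.
apply: ler_sum => i _; apply: ler_wpM2l => //.
have -> : kl_gauss sigma (mu a i) (retarget t a i)
    = (t a - m a) ^+ 2 / (2 * sigma ^+ 2 * S ^+ 2) * Num.sg (beta i) ^+ 2.
  by rewrite /kl_gauss /retarget; field; rewrite !gt_eqF.
rewrite ler_piMr ?divr_ge0 ?sqr_ge0 ?(ltW C_gt0) // sqr_sg.
by case: (_ != 0); rewrite ?ler01.
Qed.

(* The order of arms [0] and [b] is reversed around [p]; the offset [s] keeps
   arm [0] apart from the unmoved arms. *)
Definition two_arm_target (b : 'I_K.+1) (p s : R) (c : 'I_K.+1) : R :=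
  if c == ord0 then p + s
  else if c == b then p + (if m ord0 < m b then 0 else 2) * s
  else m c.

Lemma two_arm_target_Alt b p : b != ord0 ->
  exists2 delta, 0 < delta &
    forall s, 0 < s < delta -> Alt beta mu (retarget (two_arm_target b p s)).
Proof.
move=> b_neq0; have [delta delta_gt0 gap] := exists_gap_right m p.
exists delta => // s s_range; have /andP[s_gt0 _] := s_range; split.
  move=> a a_neq0; rewrite !arm_mean_retarget /two_arm_target eqxx (negbTE a_neq0).
  have [_|_] := eqVneq a b; last exact: gap.
  by apply/eqP; case: ifP => _ ?; lra.
apply/negP => /eqP/setP/(_ b).
rewrite !inE b_neq0 /= !arm_mean_retarget /two_arm_target eqxx (negbTE b_neq0) eqxx.
by case: ifP => [_|/negbT]; rewrite -?leNgt => ?; lra.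
Qed.

Lemma alt_cost_two_arm_le w b p : (forall a i, 0 <= w a i) -> b != ord0 ->
  let u a := \sum_(i < J) w a i in
  exists k, forall s, 0 <= s <= 1 ->
    alt_cost w (retarget (two_arm_target b p s))
      <= (u ord0 * (p - m ord0) ^+ 2 + u b * (p - m b) ^+ 2 + s * k)
         / (2 * sigma ^+ 2 * S ^+ 2).
Proof.
move=> w_ge0 b_neq0 u; set e : R := if m ord0 < m b then 0 else 2.
have u_ge0 a : 0 <= u a by apply: sumr_ge0.
exists (u ord0 * (2 * `|(p - m ord0) * 1| + 1 ^+ 2) + u b * (2 * `|(p - m b) * e| + e ^+ 2)).
move=> s s_range; apply: le_trans (alt_cost_retarget_le _ w_ge0) _.
rewrite (bigD1 ord0) //= (bigD1 b) //= [X in _ + (_ + X)]big1 ?addr0; last first.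
  move=> a /andP[a_neq0 a_neq_b].
  by rewrite /two_arm_target (negbTE a_neq0) (negbTE a_neq_b) subrr expr0n /= !mulr0 mul0r.
rewrite /two_arm_target eqxx (negbTE b_neq0) eqxx -/e -/(u ord0) -/(u b) -mulrDl.
rewrite ler_pM2r ?invr_gt0 ?mulr_gt0 ?exprn_gt0 //.
have -> : p + s - m ord0 = p - m ord0 + s * 1 by ring.
have -> : p + e * s - m b = p - m b + s * e by ring.
apply: le_trans (lerD (ler_wpM2l (u_ge0 ord0) (sqr_shift_le _ _ s_range))
                      (ler_wpM2l (u_ge0 b) (sqr_shift_le _ _ s_range))) _.
by rewrite le_eqVlt; apply/orP; left; apply/eqP; ring.
Qed.

Lemma alt_objective_le_pair_term w b : (forall a i, 0 <= w a i) -> b != ord0 ->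
  alt_objective sigma beta mu w
    <= pair_term (m ord0 - m b) (\sum_(i < J) w ord0 i) (\sum_(i < J) w b i)
       / (sigma ^+ 2 * S ^+ 2).
Proof.
move=> w_ge0 b_neq0; set u0 := \sum_(i < J) w ord0 i; set ub := \sum_(i < J) w b i.
pose p := (u0 * m ord0 + ub * m b) / (u0 + ub).
have [delta delta_gt0 Alt_s] := two_arm_target_Alt p b_neq0.
have [k cost_le] := alt_cost_two_arm_le p w_ge0 b_neq0.
set C := 2 * sigma ^+ 2 * S ^+ 2; have C_gt0 : 0 < C by rewrite !mulr_gt0 ?exprn_gt0.
apply: (@le_of_forall_small_shift _ _ _ (k / C) (Num.min delta 1)).
  by rewrite lt_min delta_gt0 ltr01.
move=> s /andP[s_gt0]; rewrite lt_min => /andP[s_lt s_lt1].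
apply: le_trans (alt_objective_le_cost w_ge0 (Alt_s s _)) _; first by rewrite s_gt0.
apply: le_trans (cost_le s _) _; first by rewrite !ltW.
rewrite pair_term_weighted_mean ?sumr_ge0 // -/u0 -/ub.
by rewrite le_eqVlt; apply/orP; left; apply/eqP; rewrite /C; field; rewrite !gt_eqF.
Qed.

Hypothesis K_gt0 : (0 < K)%N.

Lemma ord_max_neq0 : ord_max != ord0 :> 'I_K.+1.
Proof. by rewrite -(inj_eq val_inj) /= -lt0n. Qed.

Lemma Alt_nonempty : exists lam, Alt beta mu lam.
Proof.
have [delta delta_gt0 Alt_s] := two_arm_target_Alt 0 ord_max_neq0.
by eexists; apply: (Alt_s (delta / 2)); rewrite divr_gt0 //=; lra.
Qed.

Lemma alt_objective_le_u_objective w : (forall a i, 0 <= w a i) ->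
  alt_objective sigma beta mu w
    <= u_objective beta mu (fun a => \sum_(i < J) w a i) / (sigma ^+ 2 * S ^+ 2).
Proof.
move=> w_ge0; have C_gt0 : 0 < sigma ^+ 2 * S ^+ 2 by rewrite mulr_gt0 ?exprn_gt0.
rewrite ler_pdivlMr //; apply: le_bigmin => [|b b_neq0]; rewrite -ler_pdivlMr //.
  exact: alt_objective_le_pair_term ord_max_neq0.
exact: alt_objective_le_pair_term.
Qed.

Lemma u_objective_le_alt_objective (u : 'I_K.+1 -> R) : (forall a, 0 <= u a) ->
  u_objective beta mu u / (sigma ^+ 2 * S ^+ 2)
    <= alt_objective sigma beta mu (fun a i => u a * (`|beta i| / S)).
Proof.
move=> u_ge0; apply: lb_le_alt_objective Alt_nonempty _ => lam.
exact: alt_cost_ge_u_objective.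
Qed.

Lemma active_optimal (ustar : 'I_K.+1 -> R) : in_simplex ustar ->
  (forall u, in_simplex u -> u_objective beta mu u <= u_objective beta mu ustar) ->
  optimal_weights (@C_active R K J) sigma beta mu
    (fun a i => ustar a * (`|beta i| / S)).
Proof.
move=> [ustar_ge0 ustar_sum1] ustar_opt; split.
  split=> [a i|]; first by rewrite mulr_ge0 ?divr_ge0 ?(ltW beta_norm_gt0).
  under eq_bigr do rewrite -mulr_sumr -mulr_suml divff ?gt_eqF // mulr1.
  exact: ustar_sum1.
move=> w [w_ge0 w_sum1]; apply: le_trans (alt_objective_le_u_objective w_ge0) _.
apply: le_trans (u_objective_le_alt_objective ustar_ge0).
rewrite ler_pM2r ?invr_gt0 ?mulr_gt0 ?exprn_gt0 //; apply: ustar_opt.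
by split=> [a|//]; apply: sumr_ge0.
Qed.

End GaussianAlternatives.

Lemma optimal_weights_sub (R : realType) (K J : nat)
    (C C' : ('I_K.+1 -> 'I_J -> R) -> Prop) sigma beta mu w :
  optimal_weights C' sigma beta mu w -> C w -> (forall w', C w' -> C' w') ->
  optimal_weights C sigma beta mu w.
Proof. by move=> [_ w_opt] Cw CC'; split=> // w' /CC'/w_opt. Qed.

Lemma C_agnostic_active (R : realType) (K J : nat) (alpha : 'I_J -> R)
    (w : 'I_K.+1 -> 'I_J -> R) :
  in_simplex alpha -> C_agnostic alpha w -> C_active w.
Proof.
move=> [alpha_ge0 alpha_sum1] [u [[u_ge0 u_sum1] wE]]; split=> [a i|].
  by rewrite wE mulr_ge0.
under eq_bigr do under eq_bigr do rewrite wE.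
rewrite exchange_big /=; under eq_bigr do rewrite -mulr_sumr u_sum1 mulr1.
exact: alpha_sum1.
Qed.

Theorem proposition3 (R : realType) (K J : nat) (sigma : R)
  (alpha beta : 'I_J -> R) (mu : 'I_K.+1 -> 'I_J -> R) (ustar : 'I_K.+1 -> R) :
  (0 < K)%N ->
  0 < sigma ->
  in_simplex alpha ->
  in_L beta mu ->
  (exists i, beta i != 0) ->
  in_simplex ustar ->
  (forall u : 'I_K.+1 -> R, in_simplex u ->
     u_objective beta mu u <= u_objective beta mu ustar) ->
  let wstar := fun (a : 'I_K.+1) (i : 'I_J) =>
                 ustar a * (`|beta i| / \sum_(j < J) `|beta j|) in
  optimal_weights (@C_active R K J) sigma beta mu wstar /\
  ((forall i, alpha i = beta i) ->
     optimal_weights (C_agnostic alpha) sigma beta mu wstar /\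
     optimal_weights (C_prop alpha) sigma beta mu wstar).
Proof.
move=> K_gt0 sigma_gt0 alpha_simplex _ [i0 beta_i0] ustar_simplex ustar_opt wstar.
have S_gt0 : 0 < \sum_(j < J) `|beta j|.
  by rewrite (bigD1 i0) //= ltr_pwDl ?normr_gt0 ?sumr_ge0.
have active_opt := active_optimal sigma_gt0 S_gt0 K_gt0 ustar_simplex ustar_opt.
split=> // alpha_beta.
have wstarE a i : wstar a i = alpha i * ustar a.
  have S1 : \sum_(j < J) `|beta j| = 1.
    by rewrite -alpha_simplex.2; apply: eq_bigr => j _; rewrite -alpha_beta ger0_norm ?alpha_simplex.1.
  by rewrite /wstar S1 divr1 -alpha_beta ger0_norm ?alpha_simplex.1 // mulrC.
split; apply: (optimal_weights_sub active_opt).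
- by exists ustar.
- by move=> w; exact: C_agnostic_active.
- split=> [|i]; first exact: active_opt.1.
  change (\sum_(a < K.+1) wstar a i = alpha i).
  by under eq_bigr do rewrite wstarE; rewrite -mulr_sumr ustar_simplex.2 mulr1.
- by move=> w [].
Qed.
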